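(* Let $A$ be a semiprime non-commutative associative algebra over $\Phi$ with center $Z$. Then: (i) $\mathrm{Der}(A)/I_Z$ is a strongly non-degenerate Lie algebra; (ii) if $Z$ contains no non-zero associative ideals of $A$ (in particular, if $A$ is prime), then $\mathrm{Der}(A)$ is a strongly non-degenerate Lie algebra.
   Context: $\Phi$ is a unital commutative ring in which $2$ and $3$ are invertible; all algebras are $\Phi$-modules. $\mathrm{Der}(A)$ is the Lie algebra (under $[\delta,\mu]=\delta\mu-\mu\delta$) of all associative derivations of $A$. $Z$ is the center of $A$ and $I_Z=\{\delta\in\mathrm{Der}(A): \delta(A)\subseteq Z\}$. An element $x$ of a Lie algebra $M$ is an absolute zero divisor if $[x,[x,M]]=0$; $M$ is strongly non-degenerate if it has no non-zero absolute zero divisors. *)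

From HB Require Import structures.
From mathcomp Require Import all_boot all_order all_algebra.
Set Implicit Arguments. Unset Strict Implicit. Unset Printing Implicit Defensive.
Import GRing.Theory.
Local Open Scope ring_scope.

Definition assoc_algebra (Phi : comPzRingType) (A : lmodType Phi)
    (mul : A -> A -> A) : Prop :=
  [/\ forall x y z, mul x (mul y z) = mul (mul x y) z,
      forall x y z, mul (x + y) z = mul x z + mul y z,
      forall x y z, mul x (y + z) = mul x y + mul x z,
      forall (a : Phi) x y, mul (a *: x) y = a *: mul x y
    & forall (a : Phi) x y, mul x (a *: y) = a *: mul x y].

Definition alg_ideal (Phi : comPzRingType) (A : lmodType Phi)
    (mul : A -> A -> A) (I : A -> Prop) : Prop :=
  [/\ I 0,
      forall x y, I x -> I y -> I (x + y),
      forall (a : Phi) x, I x -> I (a *: x),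
      forall x y, I y -> I (mul x y)
    & forall x y, I x -> I (mul x y)].

(* semiprime: no non-zero ideal I with I^2 = 0 (I^2 is spanned by the
   products of elements of I) *)
Definition semiprime (Phi : comPzRingType) (A : lmodType Phi)
    (mul : A -> A -> A) : Prop :=
  forall I : A -> Prop, alg_ideal mul I ->
    (forall x y, I x -> I y -> mul x y = 0) -> forall x, I x -> x = 0.

Definition noncommutative (Phi : comPzRingType) (A : lmodType Phi)
    (mul : A -> A -> A) : Prop :=
  exists x y, mul x y <> mul y x.

Definition center (Phi : comPzRingType) (A : lmodType Phi)
    (mul : A -> A -> A) (z : A) : Prop :=
  forall x, mul z x = mul x z.

Definition is_derivation (Phi : comPzRingType) (A : lmodType Phi)
    (mul : A -> A -> A) (d : A -> A) : Prop :=
  [/\ forall x y, d (x + y) = d x + d y,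
      forall (a : Phi) x, d (a *: x) = a *: d x
    & forall x y, d (mul x y) = mul (d x) y + mul x (d y)].

Definition der_bracket (A : zmodType) (d m : A -> A) : A -> A :=
  fun x => d (m x) - m (d x).

Definition I_Z (Phi : comPzRingType) (A : lmodType Phi)
    (mul : A -> A -> A) (d : A -> A) : Prop :=
  is_derivation mul d /\ forall x, center mul (d x).

(* The quotient Lie algebra L / I (L a Lie algebra given as a predicate on
   the carrier, I an ideal of L given as a predicate, br the bracket) is
   strongly non-degenerate: no non-zero absolute zero divisors, i.e.
   x + I with [x,[x,L]] \subseteq I forces x \in I. *)
Definition strongly_nondeg_quot (T : Type) (L I : T -> Prop)
    (br : T -> T -> T) : Prop :=
  forall x, L x -> (forall y, L y -> I (br x (br x y))) -> I x.

Definition strongly_nondeg (T : Type) (L : T -> Prop) (zero : T)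
    (br : T -> T -> T) : Prop :=
  strongly_nondeg_quot L (fun x => x = zero) br.

From HB Require Import structures.
From mathcomp Require Import all_boot all_order all_algebra.
From Stdlib Require Import FunctionalExtensionality.
Import GRing.Theory.
Local Open Scope ring_scope.
Set Implicit Arguments. Unset Strict Implicit.

(* Let D be a derivation with [D,[D,mu]] in I_Z for every derivation
   mu; we show D(A) is contained in the center Z.  Testing mu against inner
   derivations ad b gives [D,[D,ad b]] = ad (D^2 b), hence every D^2 b is
   central; testing mu against the derivations z D (z central) gives that
   D^2 z . D x is central.  Differentiating the central elements D^2(xy) and
   commuting with an arbitrary w yields the identity
       D^2x [y,w] + 2 [Dx Dy, w] + D^2y [x,w] = 0,
   from which a chain of annihilation facts (using that 2 and 3 are invertible)
   leads to: Dx Dy is central and Dx [s,t] = 0, and finally [Dx, w] = 0.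
   Every "annihilation implies zero" step rests on the semiprime criterion
   (c A c = 0 and c^2 = 0 imply c = 0).

   If D(A) is central, the identity Dx [y,w] + Dy [x,w] = 0 shows
   that every Dx lies in the ideal of central elements annihilating all
   commutators; when Z contains no non-zero ideal this forces D = 0. *)

Section AssocAlgebra.
Variables (Phi : comPzRingType) (A : lmodType Phi) (mul : A -> A -> A).
Hypothesis hA : assoc_algebra mul.
Local Notation "x ** y" := (mul x y) (at level 40, left associativity).

Lemma amulA x y z : x ** (y ** z) = x ** y ** z.
Proof. by case: hA. Qed.
Lemma amulDl x y z : (x + y) ** z = x ** z + y ** z.
Proof. by case: hA. Qed.
Lemma amulDr x y z : x ** (y + z) = x ** y + x ** z.
Proof. by case: hA. Qed.
Lemma amulZl (a : Phi) x y : (a *: x) ** y = a *: (x ** y).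
Proof. by case: hA. Qed.
Lemma amulZr (a : Phi) x y : x ** (a *: y) = a *: (x ** y).
Proof. by case: hA. Qed.
Lemma amul0r x : x ** 0 = 0.
Proof. by apply: (addrI (x ** 0)); rewrite -amulDr !addr0. Qed.
Lemma amul0l x : 0 ** x = 0.
Proof. by apply: (addrI (0 ** x)); rewrite -amulDl !addr0. Qed.
Lemma amulNl x y : (- x) ** y = - (x ** y).
Proof. by apply: (addrI (x ** y)); rewrite -amulDl !subrr amul0l. Qed.
Lemma amulNr x y : x ** (- y) = - (x ** y).
Proof. by apply: (addrI (x ** y)); rewrite -amulDr !subrr amul0r. Qed.
Lemma amulBl x y z : (x - y) ** z = x ** z - y ** z.
Proof. by rewrite amulDl amulNl. Qed.
Lemma amulBr x y z : x ** (y - z) = x ** y - x ** z.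
Proof. by rewrite amulDr amulNr. Qed.
Lemma amulnl x y n : (x *+ n) ** y = (x ** y) *+ n.
Proof. by elim: n => [|n IH]; rewrite ?mulr0n ?amul0l // !mulrS amulDl IH. Qed.
Lemma amulnr x y n : x ** (y *+ n) = (x ** y) *+ n.
Proof. by elim: n => [|n IH]; rewrite ?mulr0n ?amul0r // !mulrS amulDr IH. Qed.

Lemma natmul_eq0 n (x : A) : (exists u : Phi, n%:R * u = 1) -> x *+ n = 0 -> x = 0.
Proof.
case=> u hu hx.
by rewrite -[x]scale1r -hu mulrC -scalerA scaler_nat hx scaler0.
Qed.

(* The commutator [x,y]; it is locked so that rewriting with the ring laws
   does not unfold it. *)
Definition comm x y := locked (x ** y - y ** x).
Lemma commE x y : comm x y = x ** y - y ** x.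
Proof. by rewrite /comm -lock. Qed.

Lemma commDl x y w : comm (x + y) w = comm x w + comm y w.
Proof. by rewrite !commE amulDl amulDr opprD addrACA. Qed.
Lemma commMl x y w : comm (x ** y) w = x ** comm y w + comm x w ** y.
Proof. by rewrite !commE amulBr amulBl !amulA addrA subrK. Qed.
Lemma commMr s y t : comm s (y ** t) = comm s y ** t + y ** comm s t.
Proof. by rewrite !commE amulBr amulBl !amulA addrA subrK. Qed.

Lemma comm_center c w : center mul c -> comm c w = 0.
Proof. by move=> hc; rewrite commE hc subrr. Qed.
Lemma center_comm0 c : (forall w, comm c w = 0) -> center mul c.
Proof. by move=> hc w; apply/eqP; rewrite -subr_eq0 -commE hc. Qed.
Lemma comm_centerMl u x w : center mul u -> comm (u ** x) w = u ** comm x w.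
Proof. by move=> hu; rewrite !commE amulBr !amulA (hu w). Qed.
Lemma center_mulCA u x y : center mul u -> u ** (x ** y) = x ** (u ** y).
Proof. by move=> hu; rewrite !amulA hu. Qed.

Lemma mul_comm_expand y s t : y ** comm s t = comm s (y ** t) - comm s y ** t.
Proof. by rewrite commMr addrC addKr. Qed.
Lemma comm_mul_expand s t r : comm s t ** r = comm s (t ** r) - t ** comm s r.
Proof. by rewrite commMr addrK. Qed.

Definition comm_annihilating_center c :=
  center mul c /\ forall s t, c ** comm s t = 0.

Lemma comm_annihilating_center_ideal : alg_ideal mul comm_annihilating_center.
Proof.
have left_closed c y : comm_annihilating_center c -> comm_annihilating_center (y ** c).
  move=> [hc hct]; split.
    apply: center_comm0 => w.
    by rewrite -(hc y) comm_centerMl // (comm_center w hc) amul0r.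
  by move=> s t; rewrite -(hc y) -amulA mul_comm_expand amulBr hct amulA hct amul0l subr0.
split.
- by split=> [y|s t]; rewrite ?amul0l ?amul0r.
- move=> a b [ha ha'] [hb hb']; split; first by move=> y; rewrite amulDl amulDr ha hb.
  by move=> s t; rewrite amulDl ha' hb' addr0.
- move=> a c [hc hc']; split; first by move=> y; rewrite amulZl amulZr hc.
  by move=> s t; rewrite amulZl hc' scaler0.
- by move=> y c; apply: left_closed.
- by move=> c y hc; rewrite hc.1; apply: left_closed.
Qed.

Section Semiprime.
Hypothesis hsp : semiprime mul.

(* The semiprime criterion: c A c = 0 and c^2 = 0 force c = 0.  (A need not be
   unital, so c^2 = 0 is not implied by c A c = 0.)  The ideal used consists of
   the x with c x = c A x = 0 that annihilate every such element on the left. *)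
Lemma semiprime_zero c : (forall r, c ** r ** c = 0) -> c ** c = 0 -> c = 0.
Proof.
move=> hcrc hcc.
pose R z := c ** z = 0 /\ forall y, c ** y ** z = 0.
pose I x := R x /\ forall z, R z -> x ** z = 0.
have R_ideal x y : R x -> R (y ** x) /\ R (x ** y).
  move=> [h1 h2]; split; split.
  - by rewrite amulA h2.
  - by move=> t; rewrite !amulA -(amulA c) h2.
  - by rewrite amulA h1 amul0l.
  - by move=> t; rewrite amulA h2 amul0l.
have Ic : I c by split; [split | move=> z []].
apply: (hsp (I := I)) Ic; last by move=> x y [_ hx] [ry _]; apply: hx.
split.
- split; first by split; [exact: amul0r | move=> y; exact: amul0r].
  by move=> z _; exact: amul0l.
- move=> x y [[a1 a2] a3] [[b1 b2] b3]; split.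
    split; first by rewrite amulDr a1 b1 addr0.
    by move=> t; rewrite amulDr a2 b2 addr0.
  by move=> z hz; rewrite amulDl a3 // b3 // addr0.
- move=> a x [[a1 a2] a3]; split.
    split; first by rewrite amulZr a1 scaler0.
    by move=> t; rewrite amulZr a2 scaler0.
  by move=> z hz; rewrite amulZl a3 // scaler0.
- move=> x y [ry hy]; split; first by case: (R_ideal y x ry).
  by move=> z hz; rewrite -amulA hy ?amul0r //; case: (R_ideal z y hz).
- move=> x y [rx hx]; split; first by case: (R_ideal x y rx).
  by move=> z hz; rewrite -amulA hx //; case: (R_ideal z y hz).
Qed.

Lemma center_mul_cancel u s : center mul u -> u ** (u ** s) = 0 -> u ** s = 0.
Proof.
move=> hu h; rewrite amulA in h; apply: semiprime_zero.
  by move=> r; rewrite amulA -(hu (u ** s ** r)) !amulA h !amul0l.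
by rewrite amulA -(hu (u ** s)) amulA h amul0l.
Qed.

Lemma center_of_central_comm b : (forall x, center mul (comm b x)) -> center mul b.
Proof.
move=> hb x; apply/eqP; rewrite -subr_eq0 -commE; apply/eqP.
set c := comm b x; have hc : center mul c := hb x.
have hbc : center mul (b ** c).
  have -> : b ** c = comm b (b ** x) by rewrite /c !commE amulBr !amulA.
  exact: hb.
have hc_comm y : c ** comm b y = 0.
  by rewrite commE amulBr !amulA (hc b) (hc y) -(amulA y c b) (hc b) hbc subrr.
have hcc : c ** c = 0 by rewrite {2}/c hc_comm.
by apply: semiprime_zero => // r; rewrite -amulA -(hc r) amulA hcc amul0l.
Qed.

Lemma sandwich_zero d p :
  (forall r, d ** r ** d ** p = 0) -> d ** d ** p = 0 -> d ** p ** d = 0.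
Proof.
move=> hr hd; apply: semiprime_zero.
  move=> r.
  have -> : d ** p ** d ** r ** (d ** p ** d) = d ** p ** (d ** r ** d ** p) ** d.
    by rewrite !amulA.
  by rewrite hr amul0r amul0l.
have -> : d ** p ** d ** (d ** p ** d) = d ** p ** (d ** d ** p) ** d by rewrite !amulA.
by rewrite hd amul0r amul0l.
Qed.

End Semiprime.

Section Derivation.
Variable D : A -> A.
Hypothesis hD : is_derivation mul D.

Lemma derD x y : D (x + y) = D x + D y. Proof. by case: hD. Qed.
Lemma derM x y : D (x ** y) = D x ** y + x ** D y. Proof. by case: hD. Qed.
Lemma der0 : D 0 = 0.
Proof. by apply: (addrI (D 0)); rewrite -derD !addr0. Qed.
Lemma derB x y : D (x - y) = D x - D y.
Proof.
have derN z : D (- z) = - D z by apply: (addrI (D z)); rewrite -derD !subrr der0.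
by rewrite derD derN.
Qed.
Lemma der_comm p q : D (comm p q) = comm (D p) q + comm p (D q).
Proof. by rewrite !commE derB !derM opprD [- _ + - _]addrC addrACA. Qed.
Lemma der2M x y : D (D (x ** y)) = D (D x) ** y + (D x ** D y) *+ 2 + x ** D (D y).
Proof. by rewrite derM derD !derM mulr2n !addrA. Qed.

Lemma der_center z : center mul z -> center mul (D z).
Proof.
move=> hz x; have := congr1 D (hz x); rewrite !derM (hz (D x)) addrC.
exact: addrI.
Qed.

Lemma inner_derivation b : is_derivation mul (comm b).
Proof.
split.
- by move=> x y; rewrite !commE amulDr amulDl opprD addrACA.
- by move=> a x; rewrite !commE amulZr amulZl scalerBr.
- by move=> x y; rewrite !commE amulBl amulBr !amulA addrA subrK.
Qed.

Lemma central_multiple_derivation z :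
  center mul z -> is_derivation mul (fun x => z ** D x).
Proof.
move=> hz; split.
- by move=> x y; rewrite derD amulDr.
- by move=> a x; case: hD => _ derZ _; rewrite derZ amulZr.
- by move=> x y; rewrite derM amulDr !amulA (hz x).
Qed.

Lemma bracket2_inner b x : der_bracket D (der_bracket D (comm b)) x = comm (D (D b)) x.
Proof.
have bracket_inner c y : der_bracket D (comm c) y = comm (D c) y.
  by rewrite /der_bracket der_comm addrK.
by rewrite {1}/der_bracket !bracket_inner der_comm addrK.
Qed.

Lemma bracket2_central_multiple z x :
  der_bracket D (der_bracket D (fun y => z ** D y)) x = D (D z) ** D x.
Proof.
have bracket_mult y : der_bracket D (fun t => z ** D t) y = D z ** D y.
  by rewrite /der_bracket derM addrK.
by rewrite {1}/der_bracket !bracket_mult derM addrK.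
Qed.

Hypothesis hsp : semiprime mul.
Hypotheses (h2 : exists u : Phi, 2%:R * u = 1) (h3 : exists u : Phi, 3%:R * u = 1).

Section AbsoluteZeroDivisorModIZ.
Hypothesis hD2 : forall mu, is_derivation mul mu ->
  forall x, center mul (der_bracket D (der_bracket D mu) x).

Lemma der2_center b : center mul (D (D b)).
Proof.
apply: center_of_central_comm => // x; rewrite -bracket2_inner.
exact: hD2 (inner_derivation b) x.
Qed.

(* The basic identity: commute the central element D^2(xy) with w. *)
Lemma der2_product_comm x y w :
  D (D x) ** comm y w + (comm (D x ** D y) w) *+ 2 + D (D y) ** comm x w = 0.
Proof.
have := comm_center w (der2_center (x ** y)).
rewrite der2M !commDl (comm_centerMl _ _ (der2_center x)) -(der2_center y x).
by rewrite (comm_centerMl _ _ (der2_center y)) mulr2n.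
Qed.

Lemma der2_product_comm_center z x w : center mul z ->
  (D z ** comm (D x) w) *+ 2 + D (D z) ** comm x w = 0.
Proof.
move=> hz; have := der2_product_comm x z w.
rewrite (comm_center w hz) amul0r add0r -(der_center hz (D x)).
by rewrite comm_centerMl //; apply: der_center.
Qed.

(* For z central, D^2 z kills all commutators [x,w]: multiply the identity
   above by D^2 z and use that D^2 z . Dx is central (test derivation z D). *)
Lemma der2_center_annihilates z x w : center mul z -> D (D z) ** comm x w = 0.
Proof.
move=> hz; apply: center_mul_cancel => //; first exact: der2_center.
have hzDx : D (D z) ** comm (D x) w = 0.
  have := hD2 (central_multiple_derivation hz) x.
  rewrite bracket2_central_multiple => /(comm_center w).
  by rewrite comm_centerMl //; apply: der2_center.
have := der2_product_comm_center x w hz; rewrite addrC => /eqP.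
rewrite addr_eq0 => /eqP ->.
by rewrite amulNr amulnr (center_mulCA _ _ (der2_center z)) hzDx amul0r mul0rn oppr0.
Qed.

Lemma der_center_annihilates z x w : center mul z -> D z ** comm (D x) w = 0.
Proof.
move=> hz; apply: natmul_eq0 h2 _.
by have := der2_product_comm_center x w hz; rewrite der2_center_annihilates // addr0.
Qed.

(* Specialising the basic identity to y = Dt, whose D^2 is D^3 t. *)
Lemma der3_product_comm t x w :
  D (D x) ** comm (D t) w + (D (D t) ** comm (D x) w) *+ 2
  + D (D (D t)) ** comm x w = 0.
Proof.
have := der2_product_comm x (D t) w.
by rewrite -(der2_center t (D x)) (comm_centerMl _ _ (der2_center t)).
Qed.

Lemma der3_annihilates t x w : D (D (D t)) ** comm x w = 0.
Proof.
have hD3 := der_center (der2_center t).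
apply: center_mul_cancel => //.
have := der3_product_comm t x w; rewrite addrC => /eqP; rewrite addr_eq0 => /eqP ->.
rewrite amulNr amulDr amulnr (center_mulCA _ _ hD3) (center_mulCA (D (D t)) _ hD3).
by rewrite !(der_center_annihilates _ _ (der2_center t)) !amul0r mul0rn addr0 oppr0.
Qed.

(* D^2 kills the commutators [Dx,w]: the identity a + 2b = 0 and its
   counterpart with x and t exchanged give 3 b = 0. *)
Lemma der2_annihilates_comm_der t x w : D (D t) ** comm (D x) w = 0.
Proof.
have identity u v : D (D v) ** comm (D u) w + (D (D u) ** comm (D v) w) *+ 2 = 0.
  by have := der3_product_comm u v w; rewrite der3_annihilates addr0.
apply: natmul_eq0 h3 _.
have /eqP := identity t x; rewrite addr_eq0 => /eqP e1.
have := identity x t; rewrite e1 mulNrn -mulrnA (mulrSr _ 3) opprD addrCA subrr addr0.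
by move/eqP; rewrite oppr_eq0 => /eqP.
Qed.

(* D^2 kills all commutators: multiplying the basic identity by D^2 x
   isolates D^2x D^2x [y,w] = - D^2x D^2y [x,w], and the right-hand side
   vanishes because D^2x D^2x [x,w] = 0 (take y = x, 2 invertible). *)
Lemma der2_annihilates_comm x y w : D (D x) ** comm y w = 0.
Proof.
have hsq a b : D (D a) ** (D (D a) ** comm b w) + D (D a) ** (D (D b) ** comm a w) = 0.
  have hmid : D (D a) ** comm (D a ** D b) w = 0.
    rewrite commMl amulDr (center_mulCA (D a) _ (der2_center a)).
    by rewrite der2_annihilates_comm_der amul0r amulA der2_annihilates_comm_der amul0l addr0.
  have := congr1 (mul (D (D a))) (der2_product_comm a b w).
  by rewrite amul0r !amulDr hmid addr0 addr0.
have hxx : D (D x) ** (D (D x) ** comm x w) = 0.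
  by apply: natmul_eq0 h2 _; rewrite mulr2n; apply: hsq.
apply: center_mul_cancel => //; first exact: der2_center.
apply: center_mul_cancel => //; first exact: der2_center.
have /eqP := hsq x y; rewrite addr_eq0 => /eqP ->.
rewrite amulNr (center_mulCA (D (D y)) _ (der2_center x)).
by rewrite (center_mulCA (D (D y)) _ (der2_center x)) hxx amul0r oppr0.
Qed.

Lemma der_product_center x y : center mul (D x ** D y).
Proof.
apply: center_comm0 => w; apply: natmul_eq0 h2 _.
by have := der2_product_comm x y w; rewrite !der2_annihilates_comm add0r addr0.
Qed.

(* Products of two values of D kill all commutators: apply the previous facts
   to D^2(xy) = D^2x y + 2 Dx Dy + x D^2y. *)
Lemma der_product_annihilates x y s t : D x ** D y ** comm s t = 0.
Proof.
apply: natmul_eq0 h2 _; have := der2_annihilates_comm (x ** y) s t.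
rewrite der2M 2!amulDl amulnl (der2_center x y) -(amulA y) der2_annihilates_comm.
by rewrite amul0r add0r -(amulA x) der2_annihilates_comm amul0r addr0.
Qed.

(* Dx v Dq [s,t] = 0: expand Dx D(vq). *)
Lemma der_sandwich_annihilates x v q s t : D x ** v ** D q ** comm s t = 0.
Proof.
have := der_product_annihilates x (v ** q) s t.
rewrite derM amulDr amulDl !amulA (der_product_center x v q).
by rewrite -(amulA q) der_product_annihilates amul0r add0r.
Qed.

Lemma der_comm_der x s t : D x ** comm s t ** D x = 0.
Proof.
apply: sandwich_zero => // [r|]; first exact: der_sandwich_annihilates.
exact: der_product_annihilates.
Qed.

Lemma der_mul_comm_der x r s t : D x ** (r ** comm s t) ** D x = 0.
Proof.
apply: sandwich_zero => // [v|].
  have e : D x ** r = D (x ** r) - x ** D r by rewrite derM addrK.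
  rewrite amulA -(amulA (D x ** v)) e amulBr amulBl der_sandwich_annihilates.
  by rewrite amulA -(amulA (D x)) der_sandwich_annihilates subr0.
by rewrite amulA (der_product_center x x r) -(amulA r) der_product_annihilates amul0r.
Qed.

(* Dx kills all commutators: c = Dx [s,t] satisfies c A c = 0 = c^2, since
   [s,t] r = [s,tr] - t [s,r] reduces c r Dx to the two previous facts. *)
Lemma der_annihilates_comm x s t : D x ** comm s t = 0.
Proof.
have hc r : D x ** comm s t ** r ** D x = 0.
  by rewrite -(amulA (D x)) comm_mul_expand amulBr amulBl der_comm_der der_mul_comm_der subr0.
apply: semiprime_zero => //.
  by move=> r; rewrite amulA hc amul0l.
by rewrite amulA der_comm_der amul0l.
Qed.

Lemma der_mul_annihilates_comm x y s t : D x ** y ** comm s t = 0.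
Proof.
by rewrite -amulA mul_comm_expand amulBr der_annihilates_comm amulA
  der_annihilates_comm amul0l subr0.
Qed.

Lemma der_center_of_zero_divisor x : center mul (D x).
Proof.
apply: center_comm0 => w; apply: semiprime_zero => //.
  move=> r; rewrite {1}commE !amulBl -(amulA (D x) w r) der_mul_annihilates_comm.
  by rewrite -!(amulA w) der_mul_annihilates_comm amul0r subr0.
by rewrite {1}commE amulBl der_mul_annihilates_comm -(amulA w)
  der_annihilates_comm amul0r subr0.
Qed.

End AbsoluteZeroDivisorModIZ.
Section CentralValued.
Hypothesis hDZ : forall x, center mul (D x).

(* Commuting the central element D(xy) = Dx y + x Dy with w. *)
Lemma central_der_comm_sym x y w : D x ** comm y w + D y ** comm x w = 0.
Proof.
have := comm_center w (hDZ (x ** y)).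
by rewrite derM commDl (comm_centerMl _ _ (hDZ x)) -(hDZ y x) (comm_centerMl _ _ (hDZ y)).
Qed.

(* Hence Dx [y,w] = 0: with x = y the identity gives Dx [x,w] = 0, and then
   c = Dx [y,w] = - Dy [x,w] satisfies c A c = 0 = c^2. *)
Lemma central_der_annihilates_comm x y w : D x ** comm y w = 0.
Proof.
have hself a u : D a ** comm a u = 0.
  by apply: natmul_eq0 h2 _; rewrite mulr2n; apply: central_der_comm_sym.
have eg : D x ** comm y w = - (D y ** comm x w).
  by apply/eqP; rewrite -addr_eq0; apply/eqP; apply: central_der_comm_sym.
have hcross r : D x ** comm y w ** r ** (D y ** comm x w) = 0.
  rewrite (hDZ y (comm x w)) -(amulA (D x) (comm y w) r).
  rewrite (hDZ x (comm y w ** r)) !amulA -(amulA (comm y w ** r) (D x)) hself.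
  by rewrite amul0r amul0l.
apply: semiprime_zero => // [r|].
  by rewrite {2}eg amulNr hcross oppr0.
rewrite {2}eg amulNr (hDZ y (comm x w)) amulA -(amulA (D x)) (hDZ x).
by rewrite -(amulA (comm y w)) -(hDZ x (comm x w)) hself amul0r amul0l oppr0.
Qed.

(* Part (ii): if Z contains no non-zero ideal of A, then D = 0, since every
   Dx lies in the ideal of central elements annihilating all commutators. *)
Lemma central_der_zero :
  (forall I : A -> Prop, alg_ideal mul I ->
     (forall x, I x -> center mul x) -> forall x, I x -> x = 0) ->
  forall x, D x = 0.
Proof.
move=> hI x; apply: (hI _ comm_annihilating_center_ideal); first by move=> c [].
by split=> [|s t]; [exact: hDZ | exact: central_der_annihilates_comm].
Qed.

End CentralValued.
End Derivation.
End AssocAlgebra.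

Theorem theorem2p5 (Phi : comPzRingType)
    (h2 : exists u : Phi, 2%:R * u = 1) (h3 : exists u : Phi, 3%:R * u = 1)
    (A : lmodType Phi) (mul : A -> A -> A)
    (hA : assoc_algebra mul) (hsp : semiprime mul) (hnc : noncommutative mul) :
  strongly_nondeg_quot (is_derivation mul) (I_Z mul) (@der_bracket A)
  /\ ((forall I : A -> Prop, alg_ideal mul I ->
         (forall x, I x -> center mul x) -> forall x, I x -> x = 0) ->
      strongly_nondeg (is_derivation mul) (fun _ => 0) (@der_bracket A)).
Proof.
split.
- move=> D hD hD2; split => //.
  by apply: (der_center_of_zero_divisor hA hD hsp h2 h3) => mu /hD2 [].
- move=> hI D hD hD2; apply: functional_extensionality.
  apply: (central_der_zero hA hD hsp h2) => //.
  apply: (der_center_of_zero_divisor hA hD hsp h2 h3) => mu hmu y.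
  by rewrite (hD2 mu hmu) => z; rewrite amul0l ?amul0r.
Qed.
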